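(* Let $X$ be a nonempty set of order $n \ge 3$, and let $NG$ be an NG-group on $X$ with associated directed multigraph $(NG)_{dig}$. Then $$\sum_{v \in X} \rho(v) \le 2 \cdot n!.$$
   Context: An NG-group on a set $X$ is a set of maps $X \to X$ that forms a group under composition of functions and is not contained in the symmetric group $\mathrm{Sym}(X)$. The directed multigraph $(NG)_{dig}$ has vertex set $X$. For every $f \in NG$ and every $x \in X$ there is one arc from $x$ to $f(x)$; this arc is a loop when $f(x) = x$. Arcs coming from different maps are distinct. The degree of a vertex is $\rho(v) = \rho^+(v) + \rho^-(v)$, the sum of its out-degree and its in-degree. A loop contributes $1$ to each. *)

From mathcomp Require Import all_boot.
Set Implicit Arguments. Unset Strict Implicit. Unset Printing Implicit Defensive.

Definition fcomp (X : finType) (f g : {ffun X -> X}) : {ffun X -> X} :=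
  [ffun x => f (g x)].

(* S forms a group under composition of functions: closed under composition
   (associativity is automatic), has an identity element e in S (not
   necessarily the identity map), and every element has an inverse in S. *)
Definition is_comp_group (X : finType) (S : {set {ffun X -> X}}) : Prop :=
  (forall f g, f \in S -> g \in S -> fcomp f g \in S) /\
  exists2 e, e \in S &
    (forall f, f \in S -> fcomp e f = f /\ fcomp f e = f) /\
    (forall f, f \in S -> exists2 g, g \in S & fcomp f g = e /\ fcomp g f = e).

Definition NG_group (X : finType) (S : {set {ffun X -> X}}) : Prop :=
  is_comp_group S /\ exists2 f, f \in S & ~~ injectiveb f.

(* Arcs of (NG)_dig: one arc (f, x) from x to f x for each f in NG, x in X. *)
Definition arcs (X : finType) (S : {set {ffun X -> X}}) : {set {ffun X -> X} * X} :=
  [set a | a.1 \in S].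

Definition outdeg (X : finType) (S : {set {ffun X -> X}}) (v : X) : nat :=
  #|[set a in arcs S | a.2 == v]|.

Definition indeg (X : finType) (S : {set {ffun X -> X}}) (v : X) : nat :=
  #|[set a in arcs S | a.1 a.2 == v]|.

Definition degree (X : finType) (S : {set {ffun X -> X}}) (v : X) : nat :=
  outdeg S v + indeg S v.

From mathcomp Require Import all_boot.
From mathcomp Require Import fingroup perm.

Set Implicit Arguments.
Unset Strict Implicit.
Unset Printing Implicit Defensive.

(* Every vertex has out-degree |NG|, so the degrees sum to 2 |NG| n.  The
   identity e of NG is an idempotent map, and every f in NG satisfies
   f = e f = f e; hence f maps X into the fixed-point set F of e, permutes F,
   and is determined by its restriction to F, so |NG| <= |F|!.  If F were all
   of X then e would be the identity map and every element of NG would have a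
   left inverse, i.e. be injective; so |F| <= n - 1 and |NG| <= (n - 1)!. *)

Lemma sum_card_fibers (T V : finType) (A : {set T}) (g : T -> V) :
  \sum_(v : V) #|[set a in A | g a == v]| = #|A|.
Proof.
rewrite -sum1_card (partition_big g predT) //.
by apply: eq_bigr => v _; rewrite -sum1_card; apply: eq_bigl => a; rewrite inE.
Qed.

Lemma card_arcs (X : finType) (S : {set {ffun X -> X}}) :
  #|arcs S| = #|S| * #|X|.
Proof.
by rewrite -cardsT -cardsX; apply: eq_card => a; rewrite !inE andbT.
Qed.

Lemma sum_degree (X : finType) (S : {set {ffun X -> X}}) :
  \sum_(v : X) degree S v = 2 * (#|S| * #|X|).
Proof.
pose tail (a : {ffun X -> X} * X) := a.2.
pose head (a : {ffun X -> X} * X) := a.1 a.2.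
rewrite big_split /= (sum_card_fibers _ tail) (sum_card_fibers _ head).
by rewrite card_arcs addnn mul2n.
Qed.

Section CompositionGroup.

Variables (X : finType) (S : {set {ffun X -> X}}) (e : {ffun X -> X}).
Hypothesis eS : e \in S.
Hypothesis unit_e : forall f, f \in S -> fcomp e f = f /\ fcomp f e = f.
Hypothesis inv_e :
  forall f, f \in S -> exists2 g, g \in S & fcomp f g = e /\ fcomp g f = e.

Lemma unitl_app f x : f \in S -> e (f x) = f x.
Proof. by case/unit_e => /ffunP/(_ x); rewrite ffunE. Qed.

Lemma unitr_app f x : f \in S -> f (e x) = f x.
Proof. by case/unit_e => _ /ffunP/(_ x); rewrite ffunE. Qed.

Definition fix_unit : {set X} := [set x | e x == x].

Lemma mem_fix_unit f x : f \in S -> f x \in fix_unit.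
Proof. by move=> fS; rewrite inE unitl_app. Qed.

Lemma comp_group_inj_fix f : f \in S -> {in fix_unit &, injective f}.
Proof.
move=> fS x y; rewrite !inE => /eqP ex /eqP ey fxy.
have [g _ [_ /ffunP gf]] := inv_e fS.
by rewrite -ex -ey -(gf x) -(gf y) !ffunE fxy.
Qed.

Definition restr_fix (f : {ffun X -> X}) : {ffun X -> X} :=
  [ffun x => if x \in fix_unit then f x else x].

Lemma restr_fix_inj f : f \in S -> injective (restr_fix f).
Proof.
move=> fS x y; rewrite !ffunE.
have fF z : f z \in fix_unit := mem_fix_unit z fS.
case: ifP => Fx; case: ifP => Fy //.
- exact: comp_group_inj_fix.
- by move=> fxy; rewrite -fxy fF in Fy.
- by move=> fxy; rewrite fxy fF in Fx.
Qed.

Lemma restr_fix_on f (fS : f \in S) :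
  perm_on fix_unit (perm (restr_fix_inj fS)).
Proof.
by apply/subsetP => x; rewrite inE permE ffunE; case: ifP; rewrite ?eqxx.
Qed.

Lemma restr_fix_in_inj : {in S &, injective restr_fix}.
Proof.
move=> f g fS gS /ffunP fg; apply/ffunP => x.
have Fex : e x \in fix_unit by rewrite (mem_fix_unit x eS).
by have := fg (e x); rewrite !ffunE Fex !unitr_app.
Qed.

Lemma card_comp_group_fix : #|S| <= #|fix_unit|`!.
Proof.
rewrite -(card_in_imset restr_fix_in_inj) -card_perm.
apply: leq_trans (leq_imset_card (@pval X) _).
apply/subset_leq_card/subsetP => _ /imsetP[f fS ->].
apply/imsetP; exists (perm (restr_fix_inj fS)); first exact: restr_fix_on.
by apply/ffunP => x; rewrite pvalE permE.
Qed.

End CompositionGroup.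

Lemma card_NG_group (X : finType) (S : {set {ffun X -> X}}) :
  NG_group S -> #|S| <= (#|X|.-1)`!.
Proof.
case=> [[_ [e eS [unit_e inv_e]]] [f fS /injectiveP f_ninj]].
apply: leq_trans (card_comp_group_fix eS unit_e inv_e) (leq_fact _).
have fix_proper : #|fix_unit e| < #|X|.
  rewrite -cardsT proper_card // properT; apply/eqP => fixT.
  by apply: f_ninj => x y; apply: (comp_group_inj_fix inv_e fS); rewrite fixT.
by rewrite -ltnS (leq_trans fix_proper) ?leqSpred.
Qed.

Theorem mainTheorem4 (X : finType) (n : nat) (NG : {set {ffun X -> X}}) :
  #|X| = n -> 3 <= n -> NG_group NG ->
  \sum_(v : X) degree NG v <= 2 * n`!.
Proof.
(* The bound holds for every n. *)
move=> cardX _ /card_NG_group; rewrite sum_degree leq_mul2l cardX.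
case: n cardX => [|n] _ card_NG /=; first by rewrite muln0.
by rewrite factS mulnC leq_mul2l card_NG orbT.
Qed.
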